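(* Let $a_0,\dots,a_N\in\mathbb{Q}$ and $r,d\in\mathbb{N}$ with $r\le N$, let $m=(r+1)(d+1)$, and let $M=(A\odot B_d\,|\,A\odot B_{d-1}\,|\,\cdots\,|\,A\odot B_0)\in\mathbb{Q}^{(N-r+1)\times m}$, with $A$, $B_j$, $\odot$ as in the context. Consider the following procedure (Algorithm 2). (1) Choose a prime $p$ and set $q=p$. (2) Compute a row-reduced basis $V$ of $\ker M \bmod p$ (i.e. of the kernel of the reduction of $M$ modulo $p$ over $\mathbb{F}_p$, the matrix with rows the elements of $V$ being in reduced row echelon form; entries are represented by integers in $\{0,\dots,p-1\}$). (3) If $V=\emptyset$, return ''no recurrence found''. (4) Repeat: choose a new prime $p$ (different from all primes used before) and compute a row-reduced basis $W$ of $\ker M \bmod p$; combine $V$ and $W$ entrywise by Chinese remaindering into a set $V$ of vectors in $\mathbb{Z}^m$ such that the lattice generated by $V\cup\{pq e_1,\dots,pq e_m\}$ equals $\{w\in\mathbb{Z}^m : Mw\equiv 0 \bmod pq\}$, and set $q:=pq$; apply the LLL algorithm to $V\cup\{qe_1,\dots,qe_m\}$ (where $e_i$ is the $i$th unit vector of $\mathbb{Z}^m$) and let $w$ be the first vector of the output; stop repeating as soon as $Mw=0$ and $w\neq 0$ (i.e. the recurrence $\sum_{i,j}c_{i,j}b_j(n)a_{n+i}=0$ with coefficient vector $w$ is valid on the given data). (5) Return the recurrence corresponding to $w$. Assume that every prime used does not divide any denominator of an entry of $M$ and that the rank of $M$ modulo each such prime equals the rank of $M$ over $\mathbb{Q}$.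 Then the procedure terminates, and if it returns a recurrence, the returned coefficient vector $w\in\mathbb{Z}^m$ is a nonzero element of $\ker_{\mathbb{Z}}M$, i.e. the corresponding recurrence of order $r$ and degree $d$ holds for $n=0,\dots,N-r$.
   Context: Fix a $\mathbb{Q}$-basis $b_0,b_1,\dots$ of $\mathbb{Q}[x]$ such that for every $j$, $b_0,\dots,b_j$ span the polynomials of degree at most $j$. For given $a_0,\dots,a_N\in\mathbb{Q}$ and $r\le N$, $A\in\mathbb{Q}^{(N-r+1)\times(r+1)}$ is the matrix with entry $a_{i+s}$ in row $i$ and column $s$ ($0\le i\le N-r$, $0\le s\le r$), and $B_j\in\mathbb{Q}^{(N-r+1)\times(r+1)}$ is the matrix whose row $i$ has all entries equal to $b_j(i)$. $M_1\odot M_2$ denotes the entrywise product. A vector $c\in\mathbb{Q}^{(r+1)(d+1)}$, split into blocks of length $r+1$ for $j=d,d-1,\dots,0$ with entries $c_{0,j},\dots,c_{r,j}$, corresponds to the recurrence $\sum_{i=0}^r\sum_{j=0}^d c_{i,j}b_j(n)a_{n+i}=0$; it holds on the data iff $Mc=0$. For a rational matrix $M$ with $m$ columns, $\ker_{\mathbb{Z}}M=\{x\in\mathbb{Z}^m: Mx=0\}$. LLL is the Lenstra–Lenstra–Lovász lattice reduction algorithm; it returns a basis of the input lattice whose first vector has Euclidean length at most $2^{m}$ times the length of a shortest nonzero vector of the lattice. *)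

From HB Require Import structures.
From mathcomp Require Import all_boot all_order all_algebra.
Set Implicit Arguments. Unset Strict Implicit. Unset Printing Implicit Defensive.
Import Order.TTheory GRing.Theory Num.Theory.
Local Open Scope ring_scope.

Definition graded_basis (b : nat -> {poly rat}) : Prop :=
  forall j : nat,
    (forall i : nat, (i <= j)%N -> (size (b i) <= j.+1)%N) /\
    (forall p : {poly rat}, (size p <= j.+1)%N ->
       exists c : 'I_j.+1 -> rat, p = \sum_(i < j.+1) c i *: b i).

Definition Amat (a : nat -> rat) (N r : nat) : 'M[rat]_((N - r).+1, r.+1) :=
  \matrix_(i, s) a (i + s)%N.

Definition Bmat (b : nat -> {poly rat}) (N r j : nat) : 'M[rat]_((N - r).+1, r.+1) :=
  \matrix_(i, s) (b j).[(i : nat)%:R].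

Definition hadamard (R : pzRingType) (k l : nat) (M1 M2 : 'M[R]_(k, l)) : 'M[R]_(k, l) :=
  \matrix_(i, j) (M1 i j * M2 i j).

(* M = (A .* B_d | A .* B_(d-1) | ... | A .* B_0): column k lies in block
   t = k / (r+1) (block t corresponds to j = d - t), at position s = k mod (r+1). *)
Definition recM (a : nat -> rat) (b : nat -> {poly rat}) (N r d : nat)
  : 'M[rat]_((N - r).+1, r.+1 * d.+1) :=
  \matrix_(i, k) hadamard (Amat a N r) (Bmat b N r (d - k %/ r.+1)%N)
                          i (inord (k %% r.+1)).

Definition ratv (m : nat) (w : 'cV[int]_m) : 'cV[rat]_m := map_mx (fun z : int => z%:~R) w.

Definition kerZ (n m : nat) (M : 'M[rat]_(n, m)) (w : 'cV[int]_m) : Prop :=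
  M *m ratv w = 0.

(* reduction of a rational number modulo p (meaningful when p does not divide
   the denominator) *)
Definition redp (p : nat) (x : rat) : 'F_p := (numq x)%:~R / (denq x)%:~R.

Definition redM (p n m : nat) (M : 'M[rat]_(n, m)) : 'M['F_p]_(n, m) := map_mx (@redp p) M.

Definition good_prime (p n m : nat) (M : 'M[rat]_(n, m)) : Prop :=
  prime p /\
  (forall i j, ~ (p%:Z %| denq (M i j))%Z) /\
  \rank (redM p M) = \rank M.

(* ker M mod p is the zero space (i.e. its row-reduced basis V is empty) *)
Definition kernel_mod_trivial (p n m : nat) (M : 'M[rat]_(n, m)) : Prop :=
  forall v : 'cV['F_p]_m, redM p M *m v = 0 -> v = 0.

(* {w in Z^m : M w = 0 mod q} (denominators assumed coprime to q) *)
Definition lattice_mod (q n m : nat) (M : 'M[rat]_(n, m)) (w : 'cV[int]_m) : Prop :=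
  forall i, (q%:Z %| numq ((M *m ratv w) i ord0))%Z.

Definition in_lattice (m : nat) (gens : seq 'cV[int]_m) (v : 'cV[int]_m) : Prop :=
  exists cs : seq int, size cs = size gens /\
    v = \sum_(i < size gens) cs`_i *: gens`_i.

Definition Zindep (m : nat) (B : seq 'cV[int]_m) : Prop :=
  forall cs : seq int, size cs = size B ->
    \sum_(i < size B) cs`_i *: B`_i = 0 -> forall i, (i < size B)%N -> cs`_i = 0.

Definition norm2 (m : nat) (v : 'cV[int]_m) : int := \sum_(i < m) (v i ord0) ^+ 2.

(* w is the first vector of a possible LLL output on input gens: the output is a
   basis of the lattice generated by gens, and its first vector has length at most
   2^m times that of a shortest nonzero lattice vector (squared: 4^m). *)
Definition LLL_first (m : nat) (gens : seq 'cV[int]_m) (w : 'cV[int]_m) : Prop :=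
  exists B : seq 'cV[int]_m,
    [/\ (forall v, in_lattice B v <-> in_lattice gens v), Zindep B,
        ohead B = Some w &
        forall v, in_lattice gens v -> v != 0 -> norm2 w <= (4 ^ m)%:Z * norm2 v].

Definition qunits (m q : nat) : seq 'cV[int]_m :=
  [seq (q%:Z *: delta_mx i ord0) | i <- enum 'I_m].

Definition qprod (ps : nat -> nat) (k : nat) : nat := \prod_(i < k.+1) ps i.

(* A run of Algorithm 2.  ps 0 is the prime of step (1); ps k (k >= 1) is the new
   prime of the k-th pass through step (4); Vs k is the CRT-combined set after that
   pass (q = qprod ps k); ws k is the first vector of the LLL output in that pass. *)
Definition alg2_run (m n : nat) (M : 'M[rat]_(n, m)) (ps : nat -> nat)
  (Vs : nat -> seq 'cV[int]_m) (ws : nat -> 'cV[int]_m) : Prop :=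
  forall k, (1 <= k)%N ->
    (forall v, in_lattice (Vs k ++ qunits m (qprod ps k)) v <->
               lattice_mod (qprod ps k) M v) /\
    LLL_first (Vs k ++ qunits m (qprod ps k)) (ws k).

Definition alg2_stop (m n : nat) (M : 'M[rat]_(n, m)) (w : 'cV[int]_m) : Prop :=
  M *m ratv w = 0 /\ w != 0.

(* the run terminates with result res (None = "no recurrence found",
   Some w = recurrence with coefficient vector w) *)
Definition alg2_returns (m n : nat) (M : 'M[rat]_(n, m)) (ps : nat -> nat)
  (ws : nat -> 'cV[int]_m) (res : option 'cV[int]_m) : Prop :=
  match res with
  | None => kernel_mod_trivial (ps 0) M
  | Some w => ~ kernel_mod_trivial (ps 0) M /\
      exists k, [/\ (1 <= k)%N, alg2_stop M (ws k),
                    (forall k', (1 <= k')%N -> (k' < k)%N -> ~ alg2_stop M (ws k')) &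
                    w = ws k]
  end.

(* A nonzero integer kernel vector v0 exists as soon as ker M mod p is nonzero,
   because p preserves the rank.  Each LLL output w is then at most 4^m times
   longer (in squared norm) than v0, which lies in every lattice {M w = 0 mod q}.
   Clearing denominators, the entries of M w have numerators bounded by
   C * norm2 w for a constant C depending only on M; once q exceeds
   C * 4^m * norm2 v0, these numerators are divisible by q yet smaller than q,
   hence zero.  As q is a product of k+1 primes, q >= 2^(k+1) grows without
   bound, so the stopping test eventually succeeds. *)
From HB Require Import structures.
From mathcomp Require Import all_boot all_order all_algebra.
From mathcomp Require Import zify ring.
Set Implicit Arguments. Unset Strict Implicit. Unset Printing Implicit Defensive.
Import Order.TTheory GRing.Theory Num.Theory.
Local Open Scope ring_scope.

Section MxKernel.
Variables (F : fieldType) (n m : nat).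
Implicit Type A : 'M[F]_(n, m).

Lemma mxker_trivial A : \rank A = m -> forall v : 'cV_m, A *m v = 0 -> v = 0.
Proof.
move=> rkA v Av0; apply: trmx_inj; rewrite trmx0.
have freeAT : row_free A^T by rewrite /row_free mxrank_tr rkA.
by apply: (row_free_inj freeAT); rewrite mul0mx -trmx_mul Av0 trmx0.
Qed.

Lemma mxker_nontrivial A : (\rank A < m)%N -> exists2 v : 'cV_m, v != 0 & A *m v = 0.
Proof.
move=> rkA; have : kermx A^T != 0.
  by rewrite -mxrank_eq0 mxrank_ker mxrank_tr -lt0n subn_gt0.
case/rowV0Pn=> u /sub_kermxP uA0 u0; exists u^T; first by rewrite trmx_eq0.
by rewrite -[A]trmxK -trmx_mul uA0 trmx0.
Qed.

End MxKernel.

Section CommonDenominator.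
Variables (T : finType) (f : T -> rat).

Definition cdenom : nat := \prod_t `|denq (f t)|.

Definition cnum (t : T) : int := numq (f t) * (cdenom %/ `|denq (f t)|)%N.

Lemma cdenom_gt0 : (0 < cdenom)%N.
Proof. by rewrite prodn_gt0 // => t; rewrite absz_gt0 denq_neq0. Qed.

Lemma cnumE t : (cnum t)%:~R = cdenom%:R * f t.
Proof.
have /divnK Dt : (`|denq (f t)| %| cdenom)%N by rewrite /cdenom (bigD1 t) //= dvdn_mulr.
rewrite /cnum; set e := (cdenom %/ _)%N; rewrite -Dt intrM natrM numqE.
by rewrite /e !pmulrn absz_denq; ring.
Qed.

End CommonDenominator.

(* Gauss' lemma: D x = z forces denq x | D, so |numq x| <= |z|. *)
Lemma numq_small_eq0 (x : rat) (D q : nat) (z : int) :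
  D%:R * x = z%:~R -> (0 < D)%N -> (q%:Z %| numq x)%Z -> (`|z| < q)%N -> x = 0.
Proof.
move=> Dxz D0 qx zq; set nx := numq x in qx; set dx := denq x.
have Exz : nx * D%:Z = z * dx.
  apply: (@intr_inj rat); rewrite !intrM -Dxz -[in RHS](divq_num_den x).
  by rewrite -pmulrn; field; rewrite intr_eq0 denq_neq0.
have Eabs : (`|nx| * D = `|z| * `|dx|)%N by have := congr1 absz Exz; rewrite !abszM.
have dxD : (`|dx| %| D)%N.
  by rewrite -(@Gauss_dvdr _ `|nx|) 1?coprime_sym ?coprime_num_den // Eabs dvdn_mull.
have dx0 : (0 < `|dx|)%N by rewrite absz_gt0 denq_neq0.
have nxz : (`|nx| <= `|z|)%N.
  by rewrite -(leq_pmul2r dx0) -Eabs leq_mul2l dvdn_leq ?orbT.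
apply/eqP; rewrite -numq_eq0 -/nx -absz_eq0 -leqn0 leqNgt; apply/negP => nx0.
have : (q <= `|nx|)%N by exact: dvdn_leq nx0 qx.
lia.
Qed.

Section IntVectors.
Variable m : nat.
Implicit Type w : 'cV[int]_m.

Lemma norm2_ge0 w : 0 <= norm2 w.
Proof. by apply: sumr_ge0 => i _; rewrite exprn_even_ge0. Qed.

Lemma norm_le_norm2 w j : `|w j ord0| <= norm2 w.
Proof.
have le_sqr (z : int) : `|z| <= z ^+ 2.
  rewrite -real_normK ?num_real // expr2.
  by have := normr_ge0 z; move: `|z| => t; nia.
apply: (le_trans (le_sqr _)); rewrite /norm2 (bigD1 j) //= lerDl.
by apply: sumr_ge0 => i _; rewrite exprn_even_ge0.
Qed.

Lemma norm_dot_le (c : 'I_m -> int) w :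
  `|\sum_j c j * w j ord0| <= (\sum_j `|c j|) * norm2 w.
Proof.
rewrite mulr_suml; apply: (le_trans (ler_norm_sum _ _ _)); apply: ler_sum => j _.
by rewrite normrM ler_wpM2l // norm_le_norm2.
Qed.

End IntVectors.

Lemma lattice_mod_short_ker (n m : nat) (M : 'M[rat]_(n, m)) :
  exists2 C : int, 0 <= C & forall (q : nat) (w : 'cV[int]_m),
    lattice_mod q M w -> C * norm2 w < q%:Z -> M *m ratv w = 0.
Proof.
pose f (ij : 'I_n * 'I_m) := M ij.1 ij.2.
pose Z i j := cnum f (i, j).
exists (\sum_i \sum_j `|Z i j|) => [|q w wq wC].
  by apply: sumr_ge0 => i _; apply: sumr_ge0.
apply/matrixP => i k; rewrite (ord1 k) [RHS]mxE.
pose z := \sum_j Z i j * w j ord0.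
have Dz : (cdenom f)%:R * (M *m ratv w) i ord0 = z%:~R.
  rewrite !mxE mulr_sumr rmorph_sum; apply: eq_bigr => j _.
  by rewrite !mxE rmorphM /= cnumE mulrA.
apply: (numq_small_eq0 Dz (cdenom_gt0 f) (wq i)).
have zC : `|z| <= (\sum_i \sum_j `|Z i j|) * norm2 w.
  apply: (le_trans (norm_dot_le _ _)); rewrite ler_wpM2r ?norm2_ge0 //.
  by rewrite (bigD1 i) //= lerDl; apply: sumr_ge0 => i' _; apply: sumr_ge0.
by rewrite -ltz_nat abszE (le_lt_trans zC wC).
Qed.

Lemma ratv0 (m : nat) : ratv (0 : 'cV[int]_m) = 0.
Proof. by apply/matrixP => i j; rewrite !mxE. Qed.

Lemma ker_int_of_rat (n m : nat) (M : 'M[rat]_(n, m)) (u : 'cV[rat]_m) :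
  u != 0 -> M *m u = 0 -> exists2 v : 'cV[int]_m, v != 0 & M *m ratv v = 0.
Proof.
move=> u0 Mu0; pose g j := u j ord0; pose v := \col_j cnum g j.
have ratvE : ratv v = (cdenom g)%:R *: u.
  by apply/matrixP => j k; rewrite (ord1 k) !mxE cnumE.
exists v; last by rewrite ratvE -scalemxAr Mu0 scaler0.
apply: contraNneq u0 => v0; move: ratvE; rewrite v0 ratv0 => /esym/eqP.
by rewrite scaler_eq0 pnatr_eq0 eqn0Ngt cdenom_gt0.
Qed.

Lemma head_lincomb (m : nat) (w : 'cV[int]_m) (B : seq 'cV[int]_m) :
  \sum_(i < size (w :: B)) (1 :: nseq (size B) 0)`_i *: (w :: B)`_i = w.
Proof.
rewrite big_ord_recl scale1r big1 ?addr0 // => i _.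
by rewrite /= nth_nseq if_same scale0r.
Qed.

Lemma LLL_first_neq0 (m : nat) (gens : seq 'cV[int]_m) w : LLL_first gens w -> w != 0.
Proof.
case=> -[|w' B] [_ freeB //= [<-] _]; apply/eqP => w0.
have sz : size (1 :: nseq (size B) 0 : seq int) = size (w' :: B).
  by rewrite /= size_nseq.
by have /eqP := freeB _ sz (etrans (head_lincomb _ _) w0) 0%N isT; rewrite oner_eq0.
Qed.

Lemma LLL_first_in_lattice (m : nat) (gens : seq 'cV[int]_m) w :
  LLL_first gens w -> in_lattice gens w.
Proof.
case=> -[|w' B] [eqB _ //= [<-] _]; apply/eqB.
by exists (1 :: nseq (size B) 0); rewrite head_lincomb; split; rewrite //= size_nseq.
Qed.

Lemma qprod_ge_exp2 (ps : nat -> nat) k :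
  (forall i, prime (ps i)) -> (2 ^ k.+1 <= qprod ps k)%N.
Proof.
move=> ps_prime; rewrite /qprod; elim: k.+1 => [|j IHj]; first by rewrite big_ord0.
by rewrite big_ord_recr /= expnSr leq_mul // prime_gt1.
Qed.

Section Algorithm2.
Variables (n m : nat) (M : 'M[rat]_(n, m)) (ps : nat -> nat).
Variables (Vs : nat -> seq 'cV[int]_m) (ws : nat -> 'cV[int]_m).
Hypothesis ps_good : forall k, good_prime (ps k) M.
Hypothesis run : alg2_run M ps Vs ws.

Lemma alg2_run_stops (v0 : 'cV[int]_m) : v0 != 0 -> M *m ratv v0 = 0 ->
  exists k, [&& (0 < k)%N, M *m ratv (ws k) == 0 & ws k != 0].
Proof.
move=> v0_neq0 Mv0; have [C C_ge0 short_ker] := lattice_mod_short_ker M.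
pose K := C * ((4 ^ m)%:Z * norm2 v0); pose k := (`|K|%N).+1.
have [latticeE LLLk] := run (isT : 0 < k)%N.
exists k; apply/and3P; split => //; last exact: LLL_first_neq0 LLLk.
apply/eqP/(short_ker (qprod ps k)); first exact/latticeE/LLL_first_in_lattice.
have v0_lattice : in_lattice (Vs k ++ qunits m (qprod ps k)) v0.
  by apply/latticeE => i; rewrite Mv0 mxE dvdz0.
have [B [_ _ _ LLL_short]] := LLLk.
have wK : C * norm2 (ws k) <= K by rewrite ler_wpM2l // LLL_short.
have Kq : (`|K| < qprod ps k)%N.
  apply: leq_trans (qprod_ge_exp2 k (fun i => (ps_good i).1)).
  by apply: ltn_trans (ltn_expl _ (ltnSn 1)) _; rewrite ltn_exp2l.
apply: le_lt_trans wK (le_lt_trans (ler_norm K) _).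
by rewrite -abszE ltz_nat.
Qed.

Theorem alg2_correct :
  (exists res, alg2_returns M ps ws res) /\
  (forall w, alg2_returns M ps ws (Some w) -> w != 0 /\ kerZ M w).
Proof.
split; last by move=> w [_ [k [_ [Mw w_neq0] _ ->]]].
have [_ [_ rank_mod]] := ps_good 0%N.
have [full | deficient] := eqVneq (\rank (redM (ps 0%N) M)) m.
  by exists None; exact: mxker_trivial full.
have rank_lt : (\rank (redM (ps 0%N) M) < m)%N.
  by rewrite ltn_neqAle deficient rank_leq_col.
have [u u_neq0 Mu] : exists2 u : 'cV_m, u != 0 & M *m u = 0.
  by apply: mxker_nontrivial; rewrite -rank_mod.
have [v0 v0_neq0 Mv0] := ker_int_of_rat u_neq0 Mu.
have [k stop_k min_k] := ex_minnP (alg2_run_stops v0_neq0 Mv0).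
exists (Some (ws k)); split.
  have [v v_neq0 Mv] := mxker_nontrivial rank_lt.
  by move=> trivial; rewrite (trivial v Mv) eqxx in v_neq0.
case/and3P: stop_k => k_gt0 /eqP Mw w_neq0; exists k.
split => // k' k'_gt0 lt_k' [Mw' w'_neq0].
by have := min_k k'; rewrite k'_gt0 Mw' eqxx w'_neq0 leqNgt lt_k' => /(_ isT).
Qed.

End Algorithm2.

Theorem mainTheorem1 (a : nat -> rat) (b : nat -> {poly rat}) (N r d : nat)
  (hb : graded_basis b) (hrN : (r <= N)%N)
  (ps : nat -> nat) (Vs : nat -> seq 'cV[int]_(r.+1 * d.+1))
  (ws : nat -> 'cV[int]_(r.+1 * d.+1))
  (hps_inj : injective ps)
  (hps_good : forall k, good_prime (ps k) (recM a b N r d))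
  (hrun : alg2_run (recM a b N r d) ps Vs ws) :
  (exists res, alg2_returns (recM a b N r d) ps ws res) /\
  (forall w, alg2_returns (recM a b N r d) ps ws (Some w) ->
     w != 0 /\ kerZ (recM a b N r d) w).
Proof. exact: alg2_correct hps_good hrun. Qed.
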